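(* Let $\lambda_1>\lambda_0>0$ and $a,b>0$ with $\lambda_1-\lambda_0>\frac1a+\frac1b$, and let $0<\alpha^*<b/a<\beta^*$ be the optimal stopping boundaries described in the context. Let $X$ be a Poisson process with $X_0=0$ which under the probability measure $\mathsf P_0$ has intensity $\lambda_0$, and set $L_t=\exp\{X_t\log(\lambda_1/\lambda_0)-(\lambda_1-\lambda_0)t\}$. For $\varphi>0$ define $\tau^*(\varphi)=\inf\{t\ge 0:\varphi L_t\notin(\alpha^*,\beta^* )\}$. Then: (1) for any $\varphi_0\in(\alpha^*,\beta^* )$, $\tau^*(\varphi)\to\tau^*(\varphi_0)$ $\mathsf P_0$-a.s. as $\varphi\to\varphi_0$; (2) $\tau^*(\varphi)\to 0$ $\mathsf P_0$-a.s. as $\varphi\downarrow\alpha^*$; (3) $\lim_{\varphi\uparrow\beta^*}\tau^*(\varphi)=\theta(\beta^* )$ $\mathsf P_0$-a.s., where $\theta(\beta^* ):=\inf\{t\ge0: L_t\notin(\alpha^*/\beta^*,1]\}$.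
   Context: Setting: one observes a Poisson process $X$ whose intensity is $\lambda_0$ or $\lambda_1$ ($\lambda_1>\lambda_0>0$). $\mathsf P_0$ ($\mathsf E_0$) denotes the law (expectation) under which $X$ is Poisson with intensity $\lambda_0$, $X_0=0$; $\mathbb S$ is the set of stopping times of the natural filtration of $X$. For a prior parameter $\psi>0$ (prior probability $\psi/(1+\psi)$ of intensity $\lambda_1$) and $\tau\in\mathbb S$, the Bayes cost is $\bar J(\psi;\tau)=\frac{1}{1+\psi}\mathsf E_0\big[\int_0^\tau(1+\psi L_t)\,dt+(a\psi L_\tau)\wedge b\big]$. When $\lambda_1-\lambda_0>1/a+1/b$ there exist unique constants $0<\alpha^*<b/a<\beta^*$ (independent of $\psi$) such that for every $\psi>0$ the stopping time $\inf\{t\ge0:\psi L_t\notin(\alpha^*,\beta^* )\}$ minimizes $\bar J(\psi;\cdot)$ over $\mathbb S$; these are the $\alpha^*,\beta^*$ in the statement. *)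

From HB Require Import structures.
From mathcomp Require Import all_boot all_order all_algebra.
From mathcomp Require Import all_classical all_reals all_analysis.
Set Implicit Arguments. Unset Strict Implicit. Unset Printing Implicit Defensive.
Import Order.TTheory GRing.Theory Num.Theory.
Import numFieldNormedType.Exports.
Local Open Scope classical_set_scope.
Local Open Scope ring_scope.

Section defs.
Context {d : measure_display} {Omega : measurableType d} {R : realType}.

Definition poisson_process (P : probability Omega R) (lam : R)
    (X : R -> Omega -> nat) : Prop :=
  [/\ forall w, X 0 w = 0%N,
      forall w s t, 0 <= s -> s <= t -> (X s w <= X t w)%N,
      forall w t, 0 <= t -> exists2 delta : R, 0 < delta &
         forall s, t <= s -> s < t + delta -> X s w = X t w,
      forall t (k : nat), measurable (X t @^-1` [set k])
    & forall (n : nat) (t : nat -> R) (k : nat -> nat),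
        t 0%N = 0 -> (forall i, (i < n)%N -> t i < t i.+1) ->
        P (\bigcap_(i in [set i : nat | (i < n)%N])
              [set w | (X (t i.+1) w - X (t i) w)%N = k i])
        = (\prod_(i < n) poisson_pmf (lam * (t i.+1 - t i)) (k i))%:E ].

Definition lik (lam0 lam1 : R) (X : R -> Omega -> nat) (t : R) (w : Omega) : R :=
  expR ((X t w)%:R * ln (lam1 / lam0) - (lam1 - lam0) * t).

Definition nat_filtration (X : R -> Omega -> nat) (t : R) : set (set Omega) :=
  <<s [set A | exists s (k : nat), [/\ 0 <= s, s <= t & A = X s @^-1` [set k]]] >>.

Definition stopping_time (X : R -> Omega -> nat) (tau : Omega -> \bar R) : Prop :=
  (forall w, (0 <= tau w)%E) /\
  forall t, 0 <= t -> nat_filtration X t [set w | (tau w <= t%:E)%E].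

Definition exit_time (lam0 lam1 al be : R) (X : R -> Omega -> nat) (psi : R)
    (w : Omega) : \bar R :=
  ereal_inf [set t%:E | t in [set t : R | 0 <= t /\
                 ~ (al < psi * lik lam0 lam1 X t w < be)]].

(* Bayes cost  Jbar(psi; tau) =
   1/(1+psi) E_0[ int_0^tau (1 + psi L_t) dt + (a psi L_tau) /\ b ];
   on {tau = +oo} the time integral is +oo (terminal term irrelevant, set 0). *)
Definition bayes_cost (P : probability Omega R) (lam0 lam1 a b : R)
    (X : R -> Omega -> nat) (psi : R) (tau : Omega -> \bar R) : \bar R :=
  ((1 + psi)^-1)%:E *
  \int[P]_w (\int[lebesgue_measure]_(t in [set t : R | (0 <= t)%R /\ (t%:E < tau w)%E])
               (1 + psi * lik lam0 lam1 X t w)%R%:E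
             + (if tau w is r%:E then (Num.min (a * psi * lik lam0 lam1 X r w) b)%R%:E
                else 0))%E.

End defs.

From HB Require Import structures.
From mathcomp Require Import all_boot all_order all_algebra.
From mathcomp Require Import all_classical all_reals all_analysis.
From mathcomp Require Import lra.
Set Implicit Arguments. Unset Strict Implicit. Unset Printing Implicit Defensive.
Import Order.TTheory GRing.Theory Num.Theory.
Import numFieldNormedType.Exports.
Local Open Scope classical_set_scope.
Local Open Scope ring_scope.

(* In log scale, psi L_t leaves (al, be) when ln psi + Lambda_t leaves
   (ln al, ln be), where Lambda_t = X_t ln (lam1 / lam0) - (lam1 - lam0) t
   drifts down linearly between the jumps of X.  On a bounded time interval a
   path of Lambda that stays below a level stays below it by a positive
   margin, and one that stays above a level does so too unless it comes down
   to the level exactly at a jump time; a path touching a level from above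
   crosses it right afterwards, and one touching it from below was strictly
   above it just before, again barring a jump at that time.  Hence the exit
   time is continuous in ln psi outside the event that X jumps at one of the
   countably many times at which a line n ln (lam1 / lam0) - (lam1 - lam0) s
   meets the relevant level, and this event is null because a Poisson process
   a.s. does not jump at a fixed time. *)

Lemma cvge_from_bounds {R : realType} {T : Type} {F : set_system T} {FF : Filter F}
    (g : T -> \bar R) (l : \bar R) :
  (forall r : R, (r%:E < l)%E -> \forall y \near F, (r%:E <= g y)%E) ->
  (forall r : R, (l < r%:E)%E -> \forall y \near F, (g y <= r%:E)%E) ->
  g @ F --> l.
Proof.
case: l => [l||] lower upper.
- have near_l e : 0 < e -> \forall y \near F, ((l - e)%:E <= g y <= (l + e)%:E)%E.
    move=> e0; have lo := lower (l - e) ltac:(rewrite lte_fin; lra).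
    have up := upper (l + e) ltac:(rewrite lte_fin; lra).
    by move: lo up; apply: filterS2 => y -> ->.
  apply/fine_cvgP; split.
    apply: filterS (near_l 1 ltr01) => y /andP[lo up].
    by rewrite fin_numElt (lt_le_trans _ lo) ?(le_lt_trans up) ?ltNyr ?ltry.
  apply/cvgrPdist_le => e e0; apply: filterS (near_l e e0) => y /=.
  case: (g y) => [z||] /andP[]; rewrite ?leye_eq ?leeNy_eq //= !lee_fin => ? ?.
  by rewrite ler_norml; apply/andP; split; lra.
- by apply/cvgeyPge => r; apply: lower; exact: ltry.
- by apply/cvgeNyPle => r; apply: upper; exact: ltNyr.
Qed.

Section exit_from.
Context {R : realType}.
Implicit Types (S : set R) (f g : R -> R).

Definition exit_from S f : \bar R :=
  ereal_inf [set t%:E | t in [set t | 0 <= t /\ ~ S (f t)]].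

Lemma exit_from_ge S f r :
  (forall t, 0 <= t -> t < r -> S (f t)) -> (r%:E <= exit_from S f)%E.
Proof.
move=> inS; apply: le_ereal_inf_tmp => _ [t [t0 notS] <-]; rewrite lee_fin leNgt.
by apply/negP => tr; apply: notS; apply: inS.
Qed.

Lemma exit_from_le S f t : 0 <= t -> ~ S (f t) -> (exit_from S f <= t%:E)%E.
Proof. by move=> t0 notS; apply: ereal_inf_lbound; exists t. Qed.

Lemma before_exit_from S f r t :
  (r%:E < exit_from S f)%E -> 0 <= t <= r -> S (f t).
Proof.
move=> r_lt /andP[t0 tr]; apply: contrapT => notS.
by have := lt_le_trans r_lt (exit_from_le t0 notS); rewrite lte_fin ltNge tr.
Qed.

Lemma exit_from_lt S f r :
  (exit_from S f < r%:E)%E -> exists2 t, 0 <= t < r & ~ S (f t).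
Proof.
move=> exit_lt; apply: contrapT => none; move: exit_lt; rewrite ltNge => /negP; apply.
apply: exit_from_ge => t t0 tr; apply: contrapT => notS.
by apply: none; exists t; rewrite ?t0.
Qed.

Lemma eq_exit_from S (S' : set R) f g :
  (forall t, 0 <= t -> S (f t) <-> S' (g t)) -> exit_from S f = exit_from S' g.
Proof.
move=> SS'; congr ereal_inf; congr image; apply/funext => t /=.
by apply/propext; split=> -[t0 notS]; split=> // inS; apply: notS; apply/(SS' t t0).
Qed.

End exit_from.

Definition counting_path {R : realType} (x : R -> nat) :=
  [/\ x 0 = 0%N, forall s t, 0 <= s -> s <= t -> (x s <= x t)%N
    & forall t, 0 <= t -> exists2 delta, 0 < delta &
        forall s, t <= s -> s < t + delta -> x s = x t].

Section log_likelihood_path.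
Context {R : realType} (x : R -> nat) (c mu : R).
Hypotheses (mu_gt0 : 0 < mu) (x_path : counting_path x).

Definition loglik t := (x t)%:R * c - mu * t.

Definition no_jump_at_level v := forall s (n : nat),
  0 < s -> n%:R * c - mu * s = v -> exists2 h, 0 < h <= s & x (s - h) = x s.

Lemma uniform_margin (g : R -> R) T :
  (forall k, exists2 e, 0 < e & forall t, 0 <= t <= T -> x t = k -> e <= g t) ->
  exists2 e, 0 < e & forall t, 0 <= t <= T -> e <= g t.
Proof.
have [_ x_mono _] := x_path; move=> level_margin.
suff /(_ (x T).+1) [e e0 margin] : forall N, exists2 e, 0 < e &
    forall t, 0 <= t <= T -> (x t < N)%N -> e <= g t.
  exists e => // t /andP[t0 tT]; apply: margin; first by rewrite t0.
  by rewrite ltnS x_mono.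
elim=> [|N [e e0 margin]]; first by exists 1.
have [e' e'0 margin'] := level_margin N.
exists (Num.min e e') => [|t tT]; first by rewrite lt_min e0.
rewrite ltnS leq_eqVlt => /orP[/eqP xt|xt]; rewrite ge_min.
  by rewrite margin' ?orbT.
by rewrite margin.
Qed.

Lemma level_upper_margin w T :
  (forall t, 0 <= t <= T -> loglik t < w) ->
  forall k, exists2 e, 0 < e & forall t, 0 <= t <= T -> x t = k -> e <= w - loglik t.
Proof.
have [_ _ x_rconst] := x_path; move=> below k.
have [[t0 /andP[t00 t0T] xt0]|none] :=
  pselect (exists2 t, 0 <= t <= T & x t = k); last first.
  by exists 1 => // t tT xt; exfalso; apply: none; exists t.
pose Z := [set t | 0 <= t <= T /\ x t = k].
have Zt0 : Z t0 by split => //; apply/andP.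
have Zinf : has_inf Z by split; [exists t0 | exists 0 => z [/andP[]]].
pose rho := inf Z.
have rho_le : lbound Z rho by apply: ge_inf; case: Zinf.
have rho0 : 0 <= rho by apply: lb_le_inf; [case: Zinf | move=> z [/andP[]]].
have rhoT : rho <= T by apply: le_trans (rho_le t0 Zt0) _.
have xrho : x rho = k.
  have [delta delta0 rconst] := x_rconst rho rho0.
  have [z Zz zlt] := inf_adherent delta0 Zinf.
  by rewrite -(rconst z (rho_le z Zz) zlt); case: Zz.
exists (w - loglik rho) => [|t tT xt]; first by rewrite subr_gt0 below ?rho0.
have : mu * rho <= mu * t by rewrite ler_pM2l // rho_le.
by rewrite /loglik xt xrho; lra.
Qed.

Lemma level_lower_margin v T : no_jump_at_level v ->
  (forall t, 0 <= t <= T -> v < loglik t) ->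
  forall k, exists2 e, 0 < e & forall t, 0 <= t <= T -> x t = k -> e <= loglik t - v.
Proof.
have [_ x_mono _] := x_path; move=> no_jump above k.
have [[t0 /andP[t00 t0T] xt0]|none] :=
  pselect (exists2 t, 0 <= t <= T & x t = k); last first.
  by exists 1 => // t tT xt; exfalso; apply: none; exists t.
pose Z := [set t | 0 <= t <= T /\ x t = k].
have Zt0 : Z t0 by split => //; apply/andP.
have Zsup : has_sup Z by split; [exists t0 | exists T => z [/andP[]]].
pose sigma := sup Z.
have le_sigma : ubound Z sigma by exact: sup_upper_bound.
have sigmaT : sigma <= T by apply: ge_sup; [exists t0 | move=> z [/andP[]]].
have t0sigma := le_sigma t0 Zt0.
have level_k s : t0 <= s < sigma -> x s = k.
  move=> /andP[t0s ssigma].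
  have sigma_s_gt0 : 0 < sigma - s by rewrite subr_gt0.
  have [z [/andP[_ zT] xz]] := sup_adherent sigma_s_gt0 Zsup.
  rewrite -/sigma opprB addrCA subrr addr0 => sz.
  by apply/anti_leq; rewrite -{1}xz -xt0 !x_mono //; lra.
suff gap : v < k%:R * c - mu * sigma.
  exists (k%:R * c - mu * sigma - v) => [|t tT xt]; first by rewrite subr_gt0.
  have : mu * t <= mu * sigma by rewrite ler_pM2l // le_sigma.
  by rewrite /loglik xt; lra.
rewrite ltNge; apply/negP => sigma_low.
have xsigma : x sigma != k.
  apply/eqP => xs; have := above sigma; rewrite /loglik xs; lra.
have t0_lt : t0 < sigma.
  by rewrite lt_neqAle t0sigma andbT; apply: contraNneq xsigma => <-; apply/eqP.
have [crossing|at_level] := ltrP (k%:R * c - mu * sigma) v.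
  pose s := (k%:R * c - v) / mu.
  have mus : mu * s = k%:R * c - v by rewrite /s mulrCA mulfV ?gt_eqF // mulr1.
  have := above t0 ltac:(by rewrite t00); rewrite /loglik xt0 => t0_above.
  have t0s : t0 <= s by rewrite -(ler_pM2l mu_gt0) mus; lra.
  have ssigma : s < sigma by rewrite -(ltr_pM2l mu_gt0) mus; lra.
  by have := above s; rewrite /loglik level_k ?t0s //; lra.
have [h /andP[h0 hsigma] xh] := no_jump sigma k (le_lt_trans t00 t0_lt) ltac:(lra).
pose s := Num.max t0 (sigma - h).
have s_level : t0 <= s < sigma by rewrite le_max lexx gt_max t0_lt /=; lra.
have : (x (sigma - h) <= x s)%N by apply: x_mono; [lra | rewrite le_max lexx orbT].
rewrite xh (level_k s s_level) => xsigma_le.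
by apply/negP: xsigma; rewrite eqn_leq xsigma_le -xt0 x_mono.
Qed.

Lemma loglik0 : loglik 0 = 0.
Proof. by have [x0 _ _] := x_path; rewrite /loglik x0 mul0r mulr0 subrr. Qed.

Lemma loglik_below_after v t r : 0 <= t -> t < r -> loglik t <= v ->
  exists2 t', t <= t' < r & loglik t' < v.
Proof.
have [_ _ x_rconst] := x_path; move=> t0 tr at_most_v.
have [delta delta0 rconst] := x_rconst t t0.
set m := Num.min delta (r - t).
have m0 : 0 < m by rewrite lt_min delta0 subr_gt0.
have [m_delta m_r] : m <= delta /\ m <= r - t by split; rewrite ge_min lexx ?orbT.
have drift : 0 < mu * (m / 2) by rewrite mulr_gt0 // divr_gt0.
exists (t + m / 2); first by apply/andP; split; lra.
by move: at_most_v; rewrite /loglik rconst; lra.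
Qed.

Lemma loglik_above_before w t : no_jump_at_level w -> 0 < t -> w <= loglik t ->
  exists2 t', 0 <= t' <= t & w < loglik t'.
Proof.
move=> no_jump t_pos; rewrite le_eqVlt => /orP[/eqP at_w|above].
  have [h /andP[h0 ht] xh] := no_jump t (x t) t_pos (esym at_w).
  have drift : 0 < mu * h by rewrite mulr_gt0.
  exists (t - h); first by apply/andP; split; lra.
  by rewrite at_w /loglik xh; lra.
by exists t; rewrite ?(ltW t_pos) ?lexx.
Qed.

Definition log_exit_time A B u :=
  exit_from (fun y => A < y < B) (fun t => u + loglik t).

Lemma log_exit_time_le_near {T} {F : set_system T} {FF : Filter F} (u : T -> R)
    A B u0 t :
  0 <= t -> (u0 + loglik t < A) || (B < u0 + loglik t) -> u @ F --> u0 ->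
  \forall y \near F, (log_exit_time A B (u y) <= t%:E)%E.
Proof.
move=> t0 outside u_u0.
set gap := Num.max (A - (u0 + loglik t)) (u0 + loglik t - B).
have gap0 : 0 < gap by rewrite /gap lt_max !subr_gt0.
move/cvgrPdist_lt: u_u0 => /(_ _ gap0); apply: filterS => y near_u0.
apply: exit_from_le t0 _; apply/negP; rewrite negb_and -!leNgt.
move: near_u0; rewrite lt_max !ltr_norml => /orP[] /andP[? ?].
  by apply/orP; left; lra.
by apply/orP; right; lra.
Qed.

Lemma log_exit_time_cvg {T} {F : set_system T} {FF : Filter F} (u : T -> R) A B u0 :
  A < u0 < B -> no_jump_at_level (A - u0) -> no_jump_at_level (B - u0) ->
  u @ F --> u0 -> log_exit_time A B (u y) @[y --> F] --> log_exit_time A B u0.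
Proof.
move=> /andP[Au0 u0B] noA noB u_u0; apply: cvge_from_bounds => r.
  move=> /before_exit_from inside.
  have above t : 0 <= t <= r -> A - u0 < loglik t by move=> /inside /andP[? _]; lra.
  have below t : 0 <= t <= r -> loglik t < B - u0 by move=> /inside /andP[_ ?]; lra.
  have [e1 e10 lo] := uniform_margin (level_lower_margin noA above).
  have [e2 e20 up] := uniform_margin (level_upper_margin below).
  have e0 : 0 < Num.min e1 e2 by rewrite lt_min e10.
  move/cvgrPdist_lt: u_u0 => /(_ _ e0); apply: filterS => y.
  rewrite lt_min !ltr_norml => /andP[/andP[? ?] /andP[? ?]].
  apply: exit_from_ge => t t0 tr; have tr' : 0 <= t <= r by rewrite t0 ltW.
  by have := lo t tr'; have := up t tr'; move=> ? ?; apply/andP; split; lra.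
move=> r_gt; have [t /andP[t0 tr] out] := exit_from_lt r_gt.
(* a strict exit before r, which persists for u near u0 *)
have [t' /andP[t'0 t'r] outside] : exists2 t', 0 <= t' < r &
    (u0 + loglik t' < A) || (B < u0 + loglik t').
  move/negP: out; rewrite negb_and -!leNgt => /orP[at_most_A|at_least_B].
    have [t' /andP[tt' t'r] lt] := @loglik_below_after (A - u0) t r t0 tr ltac:(lra).
    by exists t'; rewrite ?t'r ?(le_trans t0 tt') //; apply/orP; left; lra.
  have t_pos : 0 < t.
    rewrite lt_neqAle t0 andbT; apply/eqP => t_eq0.
    by move: at_least_B; rewrite -t_eq0 loglik0; lra.
  have [t' /andP[t'0 t't] gt] := @loglik_above_before (B - u0) t noB t_pos ltac:(lra).
  by exists t'; rewrite ?t'0 ?(le_lt_trans t't tr) //; apply/orP; right; lra.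
apply: filterS (log_exit_time_le_near t'0 outside u_u0) => y /le_trans; apply.
by rewrite lee_fin ltW.
Qed.

Lemma log_exit_time_cvg_lower {T} {F : set_system T} {FF : Filter F} (u : T -> R) A B :
  u @ F --> A -> (\forall y \near F, A < u y) ->
  log_exit_time A B (u y) @[y --> F] --> 0%E.
Proof.
have [x0 _ x_rconst] := x_path; move=> u_A A_lt.
apply: cvge_from_bounds => r; rewrite lte_fin => r_pos.
  by apply: nearW => y; apply: exit_from_ge => t t0 tr; lra.
have [delta delta0 rconst] := x_rconst 0 (lexx 0).
set m := Num.min delta r.
have [m_delta m_r] : m <= delta /\ m <= r by split; rewrite ge_min lexx ?orbT.
have mum0 : 0 < mu * m by rewrite mulr_gt0 // lt_min delta0.
move/cvgrPdist_lt: u_A => /(_ _ mum0); apply: filterS2 A_lt => y Ay.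
rewrite ltr_norml => /andP[close _].
(* before the first jump of x, u y + loglik reaches A at time t *)
pose t := (u y - A) / mu.
have mut : mu * t = u y - A by rewrite /t mulrCA mulfV ?gt_eqF // mulr1.
have t0 : 0 <= t by rewrite -(ler_pM2l mu_gt0) mut mulr0; lra.
have tm : t < m by rewrite -(ltr_pM2l mu_gt0) mut; lra.
apply: le_trans (exit_from_le t0 _) _; last by rewrite lee_fin; lra.
have xt : x t = 0%N by rewrite (rconst t) ?add0r //; lra.
apply/negP; rewrite /loglik xt mul0r negb_and -!leNgt.
by apply/orP; left; lra.
Qed.

Lemma log_exit_time_cvg_upper {T} {F : set_system T} {FF : Filter F} (u : T -> R) A B :
  no_jump_at_level (A - B) -> u @ F --> B -> (\forall y \near F, u y < B) ->
  log_exit_time A B (u y) @[y --> F] --> exit_from (fun y => A - B < y <= 0) loglik.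
Proof.
move=> noAB u_B lt_B; apply: cvge_from_bounds => r.
  move=> /before_exit_from inside.
  have above t : 0 <= t <= r -> A - B < loglik t by move=> /inside /andP[? _].
  have [e e0 lo] := uniform_margin (level_lower_margin noAB above).
  move/cvgrPdist_lt: u_B => /(_ _ e0); apply: filterS2 lt_B => y yB.
  rewrite ltr_norml => /andP[_ ?]; apply: exit_from_ge => t t0 tr.
  have tr' : 0 <= t <= r by rewrite t0 ltW.
  have /andP[_ ?] := inside t tr'; have := lo t tr'.
  by move=> ?; apply/andP; split; lra.
move=> r_gt; have [t /andP[t0 tr] out] := exit_from_lt r_gt.
have exit_le_r y :
    (log_exit_time A B (u y) <= t%:E -> log_exit_time A B (u y) <= r%:E)%E.
  by move/le_trans; apply; rewrite lee_fin ltW.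
move/negP: out; rewrite negb_and -leNgt -ltNge => /orP[low|high].
  apply: filterS lt_B => y yB; apply/exit_le_r/(exit_from_le t0); apply/negP.
  by rewrite negb_and -!leNgt; apply/orP; left; lra.
apply: filterS (log_exit_time_le_near t0 _ u_B) => [y /exit_le_r //|].
by apply/orP; right; lra.
Qed.

End log_likelihood_path.

Lemma poisson_pmf0 {R : realType} (r : R) : 0 < r -> poisson_pmf r 0 = expR (- r).
Proof. by move=> r_pos; rewrite /poisson_pmf r_pos expr0 mul1r fact0 invr1 mul1r. Qed.

Lemma poisson_pmf_series {R : realType} (r : R) : 0 < r ->
  (\sum_(k <oo) (poisson_pmf r k)%:E = 1)%E.
Proof.
move=> r_pos; have : poisson_prob r 0 [set: nat] = 1%E by exact: probability_setT.
rewrite /poisson_prob r_pos => <-; rewrite nneseries_esumT // => k.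
by rewrite lee_fin poisson_pmf_ge0.
Qed.

Section poisson_jumps.
Context {d} {Omega : measurableType d} {R : realType}.
Variables (P : probability Omega R) (lam : R) (X : R -> Omega -> nat).
Hypotheses (lam_gt0 : 0 < lam) (X_poisson : poisson_process P lam X).

Lemma poisson_counting_path w : counting_path (X ^~ w).
Proof.
have [X0 X_mono X_rconst _ _] := X_poisson.
by split; [apply: X0 | apply: X_mono | apply: X_rconst].
Qed.

Lemma eq_at_bigcup s t :
  [set w | X s w = X t w] = \bigcup_k (X s @^-1` [set k] `&` X t @^-1` [set k]).
Proof.
by apply/seteqP; split => [w /= e|w [k _ [/= -> ->]] //]; exists (X s w).
Qed.

Lemma measurable_eq_at s t : measurable [set w | X s w = X t w].
Proof.
have [_ _ _ X_meas _] := X_poisson.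
by rewrite eq_at_bigcup; apply: bigcupT_measurable => k; apply: measurableI.
Qed.

Lemma prob_stay_at s h k : 0 < h < s ->
  P (X (s - h) @^-1` [set k] `&` X s @^-1` [set k]) =
  (poisson_pmf (lam * (s - h)) k * expR (- (lam * h)))%:E.
Proof.
have [X0 X_mono _ _ X_incr] := X_poisson; move=> /andP[h_pos h_lt].
pose t i : R := if i == 0%N then 0 else if i == 1%N then s - h else s.
pose n i := if i == 0%N then k else 0%N.
have t_incr i : (i < 2)%N -> t i < t i.+1.
  by case: i => [|[|]] //= _; rewrite /t /=; lra.
have := X_incr 2%N t n erefl t_incr.
rewrite !big_ord_recl big_ord0 mulr1 /= /t /= subr0 (_ : s - (s - h) = h); last lra.
rewrite poisson_pmf0 ?mulr_gt0 // => <-; congr (P _); apply/seteqP; split => w.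
  by move=> [/= Xk1 Xk2] [|[|]] //= _; rewrite /n /= ?X0 ?Xk1 ?Xk2 ?subn0 ?subnn.
move=> incr; move: (incr 0%N erefl) (incr 1%N erefl); rewrite /n /= X0 subn0.
move=> <- /eqP; rewrite subn_eq0 => X_le; split => //=; apply/eqP.
by rewrite eqn_leq X_le X_mono //; lra.
Qed.

Lemma prob_no_jump_between s h : 0 < h < s ->
  P [set w | X (s - h) w = X s w] = (expR (- (lam * h)))%:E.
Proof.
have [_ _ _ X_meas _] := X_poisson; move=> hs.
rewrite eq_at_bigcup measure_semi_bigcup //; first last.
- by apply: bigcupT_measurable => k; apply: measurableI.
- by move=> i j _ _ [w [[/= -> ->] [/= ->]]].
- by move=> k; apply: measurableI.
transitivity (\sum_(0 <= k <oo)
    ((expR (- (lam * h)))%:E * (poisson_pmf (lam * (s - h)) k)%:E))%E.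
  by apply: eq_eseriesr => k _; rewrite -EFinM mulrC; exact: prob_stay_at.
rewrite nneseriesZl => [|k _]; last by rewrite lee_fin poisson_pmf_ge0.
by case/andP: hs => h_pos h_lt; rewrite poisson_pmf_series ?mule1 // mulr_gt0 ?subr_gt0.
Qed.

Lemma negligible_jump_at s : 0 < s ->
  P.-negligible [set w | forall h, 0 < h -> h <= s -> X (s - h) w <> X s w].
Proof.
move=> s_pos; pose h m := s / m.+2%:R.
have h_pos m : 0 < h m by rewrite divr_gt0.
have h_lt m : h m < s by rewrite ltr_pdivrMr // ltr_pMr // ltr1n.
pose N := \bigcap_m ~` [set w | X (s - h m) w = X s w].
have N_meas : measurable N.
  by apply: bigcapT_measurable => m; exact/measurableC/measurable_eq_at.
exists N; split => // [|w jump m _]; last by apply: jump; rewrite ?h_pos ?ltW.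
have PN_le m : (P N <= (lam * h m)%:E)%E.
  apply: (@le_trans _ _ (P (~` [set w | X (s - h m) w = X s w]))).
    apply: le_measure; rewrite ?inE //; first exact/measurableC/measurable_eq_at.
    exact: bigcap_inf.
  have stay : P [set w | X (s - h m) w = X s w] = (expR (- (lam * h m)))%:E.
    by apply: prob_no_jump_between; rewrite h_pos h_lt.
  rewrite (probability_setC _ (measurable_eq_at _ _)) stay.
  by rewrite -EFinB lee_fin; have := expR_ge1Dx (- (lam * h m)); lra.
apply/eqP; rewrite eq_le measure_ge0 andbT; apply/lee_addgt0Pr => e e_pos.
have ratio_ge0 : 0 <= lam * s / e by apply: divr_ge0; [apply: mulr_ge0|]; apply: ltW.
set m := Num.bound (lam * s / e); have := archi_boundP ratio_ge0; rewrite -/m.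
rewrite ltr_pdivrMr // => lam_s_lt; apply: le_trans (PN_le m) _.
rewrite add0e lee_fin /h mulrA ler_pdivrMr ?ltr0n //.
have : e * m%:R <= e * m.+2%:R by rewrite ler_pM2l // ler_nat -addn2 leq_addr.
lra.
Qed.

Lemma ae_no_jump_at_level c mu v : 0 < mu ->
  {ae P, forall w, no_jump_at_level (X ^~ w) c mu v}.
Proof.
move=> mu_gt0; pose s (n : nat) := (n%:R * c - v) / mu.
apply: (@negligibleS _ _ _ _ (\bigcup_n
    [set w | 0 < s n /\ forall h, 0 < h -> h <= s n -> X (s n - h) w <> X (s n) w])).
  move=> w /= jumps; apply: contrapT => no_jump_time; apply: jumps => t n t_pos at_v.
  have t_eq : t = s n.
    by rewrite /s -at_v opprB addrCA subrr addr0 mulrAC mulfV ?gt_eqF ?mul1r.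
  subst t; apply: contrapT => no_h; apply: no_jump_time; exists n => //.
  by split => // h h_pos h_le same; apply: no_h; exists h; rewrite ?h_pos.
apply: negligible_bigcup => n; have [s_pos|s_le0] := ltrP 0 (s n).
  by apply: negligibleS (negligible_jump_at s_pos) => w [].
by apply: negligibleS (negligible_set0 P) => w [] /=; lra.
Qed.

End poisson_jumps.

Section exit_time_limits.
Context {d} {Omega : measurableType d} {R : realType}.
Variables (lam0 lam1 al be : R) (X : R -> Omega -> nat) (w : Omega).
Hypotheses (lam01 : lam0 < lam1) (al_gt0 : 0 < al) (al_be : al < be)
  (X_path : counting_path (X ^~ w)).

Let c := ln (lam1 / lam0).
Let mu := lam1 - lam0.
Let mu_gt0 : 0 < mu. Proof. by rewrite subr_gt0. Qed.
Let be_gt0 : 0 < be. Proof. exact: lt_trans al_be. Qed.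

Lemma exit_time_log psi : 0 < psi ->
  exit_time lam0 lam1 al be X psi w =
  log_exit_time (X ^~ w) c mu (ln al) (ln be) (ln psi).
Proof.
move=> psi_gt0.
have -> : exit_time lam0 lam1 al be X psi w =
  exit_from (fun y => al < y < be) (fun t => psi * lik lam0 lam1 X t w) by [].
apply: eq_exit_from => t _.
have lik_gt0 : 0 < psi * lik lam0 lam1 X t w by rewrite mulr_gt0 ?expR_gt0.
have -> : ln psi + loglik (X ^~ w) c mu t = ln (psi * lik lam0 lam1 X t w).
  by rewrite lnM ?posrE ?expR_gt0 // expRK.
by rewrite !ltr_ln ?posrE.
Qed.

Lemma exit_time_cvg phi0 : al < phi0 < be ->
  no_jump_at_level (X ^~ w) c mu (ln al - ln phi0) ->
  no_jump_at_level (X ^~ w) c mu (ln be - ln phi0) ->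
  exit_time lam0 lam1 al be X phi w @[phi --> phi0] -->
  exit_time lam0 lam1 al be X phi0 w.
Proof.
move=> /andP[al_phi0 phi0_be] noA noB; have phi0_gt0 := lt_trans al_gt0 al_phi0.
have log_cvg : log_exit_time (X ^~ w) c mu (ln al) (ln be) (ln phi)
    @[phi --> phi0] --> log_exit_time (X ^~ w) c mu (ln al) (ln be) (ln phi0).
  apply: log_exit_time_cvg => //; last exact: continuous_ln.
  by rewrite !ltr_ln ?posrE ?al_phi0.
rewrite exit_time_log //; apply: cvg_trans _ log_cvg; apply: near_eq_cvg.
by apply: filterS (lt_nbhsr phi0_gt0) => phi phi_gt0; rewrite exit_time_log.
Qed.

Lemma exit_time_cvg_right :
  exit_time lam0 lam1 al be X phi w @[phi --> al^'+] --> 0%E.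
Proof.
have log_cvg : log_exit_time (X ^~ w) c mu (ln al) (ln be) (ln phi)
    @[phi --> al^'+] --> 0%E.
  apply: log_exit_time_cvg_lower => //.
    exact: cvg_at_right_filter (continuous_ln al_gt0).
  apply: filterS (nbhs_right_gt al) => phi al_phi.
  by rewrite ltr_ln ?posrE // (lt_trans al_gt0).
apply: cvg_trans _ log_cvg; apply: near_eq_cvg.
apply: filterS (nbhs_right_gt al) => phi al_phi.
by rewrite exit_time_log // (lt_trans al_gt0).
Qed.

Lemma exit_time_cvg_left : no_jump_at_level (X ^~ w) c mu (ln al - ln be) ->
  exit_time lam0 lam1 al be X phi w @[phi --> be^'-] -->
  exit_from (fun y => al / be < y <= 1) (fun t => lik lam0 lam1 X t w).
Proof.
move=> noAB.
have -> : exit_from (fun y => al / be < y <= 1) (fun t => lik lam0 lam1 X t w) =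
    exit_from (fun y => ln al - ln be < y <= 0) (loglik (X ^~ w) c mu).
  apply: eq_exit_from => t _.
  rewrite -ln1 -lnV ?posrE // -lnM ?posrE ?invr_gt0 //.
  by rewrite -[loglik _ _ _ t]expRK ltr_ln ?ler_ln ?posrE ?divr_gt0 ?expR_gt0.
have log_cvg : log_exit_time (X ^~ w) c mu (ln al) (ln be) (ln phi) @[phi --> be^'-] -->
    exit_from (fun y => ln al - ln be < y <= 0) (loglik (X ^~ w) c mu).
  apply: log_exit_time_cvg_upper => //.
    exact: cvg_at_left_filter (continuous_ln be_gt0).
  move: (nbhs_left_gt al_be) (nbhs_left_lt be); apply: filterS2 => phi al_phi phi_be.
  by rewrite ltr_ln ?posrE // (lt_trans al_gt0).
apply: cvg_trans _ log_cvg; apply: near_eq_cvg.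
apply: filterS (nbhs_left_gt al_be) => phi al_phi.
by rewrite exit_time_log // (lt_trans al_gt0).
Qed.

End exit_time_limits.

Theorem proposition3p2 (d : measure_display) (Omega : measurableType d)
  (R : realType) (P : probability Omega R) (X : R -> Omega -> nat)
  (lam0 lam1 a b al be : R) :
  0 < lam0 -> lam0 < lam1 -> 0 < a -> 0 < b ->
  a^-1 + b^-1 < lam1 - lam0 ->
  poisson_process P lam0 X ->
  (* al, be are the optimal stopping boundaries alpha*, beta* *)
  0 < al -> al < b / a -> b / a < be ->
  (forall psi, 0 < psi ->
     stopping_time X (exit_time lam0 lam1 al be X psi) /\
     forall tau, stopping_time X tau ->
       (bayes_cost P lam0 lam1 a b X psi (exit_time lam0 lam1 al be X psi)
        <= bayes_cost P lam0 lam1 a b X psi tau)%E) ->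
  [/\ (* (1) *)
      forall phi0, al < phi0 -> phi0 < be ->
        {ae P, forall w, exit_time lam0 lam1 al be X phi w
           @[phi --> phi0] --> exit_time lam0 lam1 al be X phi0 w},
      (* (2) *)
      {ae P, forall w, exit_time lam0 lam1 al be X phi w
           @[phi --> al^'+] --> 0%E}
    & (* (3) *)
      {ae P, forall w, exit_time lam0 lam1 al be X phi w
           @[phi --> be^'-] -->
         ereal_inf [set t%:E | t in [set t : R | 0 <= t /\
              ~ (al / be < lik lam0 lam1 X t w <= 1)]]} ].
Proof.
move=> lam0_gt0 lam01 _ _ _ X_poisson al_gt0 al_ba ba_be _.
have al_be := lt_trans al_ba ba_be.
have X_path := poisson_counting_path X_poisson.
have no_jump v : {ae P, forall w,
    no_jump_at_level (X ^~ w) (ln (lam1 / lam0)) (lam1 - lam0) v}.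
  by apply: (ae_no_jump_at_level lam0_gt0 X_poisson); rewrite subr_gt0.
split.
- move=> phi0 al_phi0 phi0_be.
  move: (no_jump (ln al - ln phi0)) (no_jump (ln be - ln phi0)).
  by apply: filterS2 => w noA noB; apply: exit_time_cvg; rewrite ?al_phi0.
- by apply: aeW => w; exact: exit_time_cvg_right.
- by apply: filterS (no_jump (ln al - ln be)) => w noAB; exact: exit_time_cvg_left.
Qed.
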